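(* Let $p$ be a polynomial, $(c,\epsilon,\delta)$ a comonoid in $(\mathbf{Poly},\mathcal{y},\triangleleft)$, and $s$ a polynomial. Composing with $\pi\triangleleft s$, where $\pi\colon\mathfrak{c}_p\to p$ is the canonical projection, gives a bijection between $(\mathfrak{c}_p,c)$-effects handler structures $\Psi\colon s\triangleleft c\to\mathfrak{c}_p\triangleleft s$ on $s$ and elementary $(p,c)$-effects handler structures $\varphi\colon s\triangleleft c\to p\triangleleft s$ on $s$.
   Context: Polynomials $p=\sum_{I\in p(1)}\mathcal{y}^{p[I]}$ form $\mathbf{Poly}$ with composition $\triangleleft$ (unit $\mathcal{y}$, the polynomial with one position and one direction) and cartesian product $\times$. $\mathfrak{c}_p$ is the cofree comonoid on $p$: $\mathfrak{c}_p=\lim_i p^{(i)}$ where $p^{(0)}=\mathcal{y}$, $p^{(1+i)}=\mathcal{y}\times(p\triangleleft p^{(i)})$, with transition maps $\pi^{(0)}$ the projection and $\pi^{(1+i)}=\mathcal{y}\times(p\triangleleft\pi^{(i)})$; it carries a comonoid structure with counit the projection to $p^{(0)}$, and $\pi\colon\mathfrak{c}_p\to p$ is the projection $\mathfrak{c}_p\to p^{(1)}=\mathcal{y}\times p\to p$. For comonoids $c,d$, a $(c,d)$-effects handler is a polynomial $s$ with a morphism $\varphi\colon s\triangleleft d\to c\triangleleft s$ such that $(\epsilon_c\triangleleft s)\circ\varphi=s\triangleleft\epsilon_d$ and $(\delta_c\triangleleft s)\circ\varphi=(c\triangleleft\varphi)\circ(\varphi\triangleleft d)\circ(s\triangleleft\delta_d)$.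 For polynomials $p,q$, an elementary $(p,q)$-effects handler is a polynomial $s$ with any morphism $s\triangleleft q\to p\triangleleft s$. *)

(* Polynomial functors in Set, represented as
   (positions, directions) pairs, morphisms as dependent lenses. *)
From Stdlib Require Import Eqdep.

Set Implicit Arguments.

Record poly := Poly { pos : Type; dir : pos -> Type }.
Arguments Poly : clear implicits.

Record pmor (p q : poly) := PMor {
  onpos : pos p -> pos q;
  ondir : forall i : pos p, dir q (onpos i) -> dir p i }.
Arguments PMor {p q}.
Arguments onpos {p q}.
Arguments ondir {p q}.

Definition pid (p : poly) : pmor p p :=
  PMor (fun i => i) (fun i d => d).

Definition pcomp (p q r : poly) (g : pmor q r) (f : pmor p q) : pmor p r :=
  PMor (fun i => onpos g (onpos f i))
       (fun i d => ondir f i (ondir g (onpos f i) d)).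

Definition y : poly := Poly unit (fun _ => unit).

Definition comp (p q : poly) : poly :=
  Poly {i : pos p & dir p i -> pos q}
       (fun x => {d : dir p (projT1 x) & dir q (projT2 x d)}).

Definition hcomp (p p' q q' : poly) (f : pmor p p') (g : pmor q q')
  : pmor (comp p q) (comp p' q') :=
  @PMor (comp p q) (comp p' q') (fun x : pos (comp p q) => existT (fun i' => dir p' i' -> pos q')
                        (onpos f (projT1 x))
                        (fun d' => onpos g (projT2 x (ondir f (projT1 x) d'))))
       (fun (x : pos (comp p q)) de => existT (fun d => dir q (projT2 x d))
                           (ondir f (projT1 x) (projT1 de))
                           (ondir g _ (projT2 de))).

Definition prod (p q : poly) : poly :=
  Poly (pos p * pos q)%type (fun x => (dir p (fst x) + dir q (snd x))%type).

Definition hprod (p p' q q' : poly) (f : pmor p p') (g : pmor q q')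
  : pmor (prod p q) (prod p' q') :=
  @PMor (prod p q) (prod p' q') (fun x : pos (prod p q) => (onpos f (fst x), onpos g (snd x)))
       (fun (x : pos (prod p q)) e => match e with
                   | inl a => inl (ondir f (fst x) a)
                   | inr b => inr (ondir g (snd x) b)
                   end).

Definition lunit (p : poly) : pmor (comp y p) p :=
  @PMor (comp y p) p (fun x : pos (comp y p) => projT2 x tt)
       (fun x e => existT (fun d : unit => dir p (projT2 x d)) tt e).

Definition runit (p : poly) : pmor (comp p y) p :=
  @PMor (comp p y) p (fun x : pos (comp p y) => projT1 x)
       (fun x d => existT (fun d : dir p (projT1 x) => unit) d tt).

Definition assoc (p q r : poly) : pmor (comp (comp p q) r) (comp p (comp q r)) :=
  @PMor (comp (comp p q) r) (comp p (comp q r)) (fun x : pos (comp (comp p q) r) =>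
          existT (fun i => dir p i -> pos (comp q r)) (projT1 (projT1 x))
            (fun d => existT (fun j => dir q j -> pos r)
                        (projT2 (projT1 x) d)
                        (fun e => projT2 x (existT _ d e))))
       (fun x dex => existT (fun de : dir (comp p q) (projT1 x) => dir r (projT2 x de))
                       (existT _ (projT1 dex) (projT1 (projT2 dex)))
                       (projT2 (projT2 dex))).

Definition assoc_inv (p q r : poly) : pmor (comp p (comp q r)) (comp (comp p q) r) :=
  @PMor (comp p (comp q r)) (comp (comp p q) r) (fun x : pos (comp p (comp q r)) =>
          existT (fun ij : pos (comp p q) => dir (comp p q) ij -> pos r)
            (existT (fun i => dir p i -> pos q) (projT1 x)
                    (fun d => projT1 (projT2 x d)))
            (fun de => projT2 (projT2 x (projT1 de)) (projT2 de)))
       (fun x dex => existT (fun d => dir (comp q r) (projT2 x d))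
                       (projT1 (projT1 dex))
                       (existT (fun e => dir r (projT2 (projT2 x (projT1 (projT1 dex))) e))
                               (projT2 (projT1 dex)) (projT2 dex))).

Definition is_comonoid (c : poly) (eps : pmor c y) (delta : pmor c (comp c c)) : Prop :=
  pcomp (lunit c) (pcomp (hcomp eps (pid c)) delta) = pid c /\
  pcomp (runit c) (pcomp (hcomp (pid c) eps) delta) = pid c /\
  pcomp (assoc c c c) (pcomp (hcomp delta (pid c)) delta)
    = pcomp (hcomp (pid c) delta) delta.

(* (c,d)-effects handler structure phi : s ◁ d -> c ◁ s on s
   (the unitors/associator of (Poly, y, ◁) are inserted explicitly). *)
Definition is_handler (c : poly) (eps_c : pmor c y) (delta_c : pmor c (comp c c))
  (d : poly) (eps_d : pmor d y) (delta_d : pmor d (comp d d))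
  (s : poly) (phi : pmor (comp s d) (comp c s)) : Prop :=
  pcomp (lunit s) (pcomp (hcomp eps_c (pid s)) phi)
    = pcomp (runit s) (hcomp (pid s) eps_d) /\
  pcomp (assoc c c s) (pcomp (hcomp delta_c (pid s)) phi)
    = pcomp (hcomp (pid c) phi)
        (pcomp (assoc c s d)
          (pcomp (hcomp phi (pid d))
            (pcomp (assoc_inv s d d) (hcomp (pid s) delta_d)))).

(* The cofree comonoid c_p = lim_i p^(i)                            *)

Section Cofree.
Variable p : poly.

Fixpoint pw (n : nat) : poly :=
  match n with
  | 0 => y
  | S n => prod y (comp p (pw n))
  end.

Fixpoint ptrans (n : nat) : pmor (pw (S n)) (pw n) :=
  match n return pmor (pw (S n)) (pw n) with
  | 0 => @PMor (pw 1) (pw 0) (fun x : pos (pw 1) => fst x) (fun x e => inl e)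
  | S n => hprod (pid y) (hcomp (pid p) (ptrans n))
  end.

Definition limpos : Type :=
  {t : forall n, pos (pw n) | forall n, onpos (ptrans n) (t (S n)) = t n}.

Definition root (t : limpos) : pos p := projT1 (snd (proj1_sig t 1)).

Lemma root_level (t : limpos) (n : nat) :
  root t = projT1 (snd (proj1_sig t (S n))).
Proof.
  induction n as [|n IH]; [reflexivity|].
  rewrite IH. destruct t as [t Ht]. simpl.
  pose proof (f_equal (fun x : pos (pw (S n)) => projT1 (snd x)) (Ht (S n))) as H.
  simpl in H. exact (eq_sym H).
Qed.

Definition childseq (t : limpos) (d : dir p (root t)) (n : nat) : pos (pw n) :=
  projT2 (snd (proj1_sig t (S n))) (eq_rect _ (dir p) d _ (root_level t n)).

Lemma child_compat_aux (n : nat) (r : pos p) (d : dir p r)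
  (A : pos (pw (S (S n)))) (B : pos (pw (S n)))
  (H : onpos (ptrans (S n)) A = B)
  (e1 : r = projT1 (snd A)) (e2 : r = projT1 (snd B)) :
  onpos (ptrans n) (projT2 (snd A) (eq_rect _ (dir p) d _ e1))
  = projT2 (snd B) (eq_rect _ (dir p) d _ e2).
Proof.
  destruct A as [u [i f]], B as [u' [i' f']]. simpl in *.
  injection H as Hu Hi Hf. subst i'.
  apply inj_pair2 in Hf. subst f'. subst r.
  rewrite (UIP_refl _ _ e2). reflexivity.
Qed.

Lemma child_compat (t : limpos) (d : dir p (root t)) (n : nat) :
  onpos (ptrans n) (childseq t d (S n)) = childseq t d n.
Proof.
  unfold childseq. apply child_compat_aux. exact (proj2_sig t (S n)).
Qed.

Definition child (t : limpos) (d : dir p (root t)) : limpos :=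
  exist _ (childseq t d) (child_compat t d).

(* Directions of the limit (the colimit of the directions, which are the
   inclusions of shorter paths into longer ones): finite rooted paths. *)
Inductive path : limpos -> Type :=
| Here (t : limpos) : path t
| There (t : limpos) (d : dir p (root t)) : path (child t d) -> path t.
Arguments Here t : assert.
Arguments There {t} d _.

Fixpoint subtree (t : limpos) (a : path t) : limpos :=
  match a with
  | Here t => t
  | There _ q => subtree q
  end.

Fixpoint pconcat (t : limpos) (a : path t) : path (subtree a) -> path t :=
  match a in path t return path (subtree a) -> path t with
  | Here t => fun b => b
  | There d q => fun b => There d (pconcat q b)
  end.

Definition cofree : poly := Poly limpos path.

Definition cofree_eps : pmor cofree y :=
  @PMor cofree y (fun t : limpos => proj1_sig t 0) (fun t _ => Here t).

Definition cofree_delta : pmor cofree (comp cofree cofree) :=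
  @PMor cofree (comp cofree cofree) (fun t : limpos => existT (fun t : limpos => path t -> limpos) t
                                  (fun a => subtree a))
       (fun t ab => pconcat (projT1 ab) (projT2 ab)).

(* pi : c_p -> p^(1) = y × (p ◁ y) -> p ◁ y = p *)
Definition cofree_proj : pmor cofree p :=
  @PMor cofree p root (fun t d => There d (Here (child t d))).

End Cofree.

(* A comonoid (c, eps, delta) in (Poly, y, ◁) is a category: its right counit
   law forces delta to be the identity on positions, so delta is described by
   a codomain map [cod] and a composition [cmp] of outgoing morphisms, and the
   comonoid laws become the identity and associativity laws
   (comonoid_as_category).

   Given an elementary handler phi : s ◁ c -> p ◁ s, every state x = (i, f) of
   s ◁ c unfolds into a p-tree: its root is the p-position emitted by phi at x,
   and its child along a p-direction is the unfolding of the state reached by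
   pulling that direction back through phi.  Following a finite path of the
   tree we record the state reached and the accumulated composite c-morphism;
   this defines handler_of phi : s ◁ c -> c_p ◁ s.  Its counit law holds by
   computation, its comultiplication law follows from the identity and
   associativity laws by induction on paths, and (pi ◁ s) ∘ handler_of phi is
   phi by the right identity law.

   Conversely the comultiplication law of any (c_p, c)-handler Psi forces its
   tree at x to be the unfolding for phi := (pi ◁ s) ∘ Psi, and its directions
   along every path to be the accumulated ones, so Psi = handler_of phi
   (handler_determined). *)

From Stdlib Require Import Eqdep FunctionalExtensionality ProofIrrelevance.

Set Implicit Arguments.

Lemma sigT_fun_eq (A B : Type) (C : A -> B -> Type) (g1 g2 : A -> B)
  (k1 : forall a, C a (g1 a)) (k2 : forall a, C a (g2 a)) :
  (forall a, existT (C a) (g1 a) (k1 a) = existT (C a) (g2 a) (k2 a)) ->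
  existT (fun g : A -> B => forall a, C a (g a)) g1 k1 = existT _ g2 k2.
Proof.
  intro H.
  assert (E : g1 = g2) by (apply functional_extensionality; intro a;
                           exact (f_equal (@projT1 _ _) (H a))).
  subst g2. f_equal. apply functional_extensionality_dep; intro a.
  exact (inj_pair2 _ _ _ _ _ (H a)).
Qed.

Lemma sigT_transport_eq (A Z : Type) (P : A -> Type) (t1 t2 : A) (E : t1 = t2)
  (F1 : P t1 -> Z) (F2 : P t2 -> Z) :
  (forall a, F1 a = F2 (eq_rect _ P a _ E)) ->
  existT (fun t => P t -> Z) t1 F1 = existT _ t2 F2.
Proof.
  subst t2; simpl; intro H. f_equal. apply functional_extensionality; exact H.
Qed.

Lemma section_as_dependent_function (A : Type) (B : A -> Type)
  (o : A -> {a : A & B a}) (H : forall x, projT1 (o x) = x) :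
  exists o' : forall a, B a, o = fun x => existT B x (o' x).
Proof.
  exists (fun x => eq_rect _ B (projT2 (o x)) x (H x)).
  apply functional_extensionality; intro x. generalize (H x).
  destruct (o x) as [x0 g]; simpl. intro e; subst. reflexivity.
Qed.

Lemma pmor_eq (P Q : poly) (f g : pmor P Q) :
  (forall i, existT (fun j => dir Q j -> dir P i) (onpos f i) (ondir f i)
           = existT _ (onpos g i) (ondir g i)) -> f = g.
Proof.
  destruct f as [of df], g as [og dg]; simpl; intro H.
  pose proof (sigT_fun_eq (fun i j => dir Q j -> dir P i) of og df dg H) as E.
  assert (Eo : of = og) by exact (f_equal (@projT1 _ _) E).
  subst og. apply inj_pair2 in E. subst dg. reflexivity.
Qed.

Lemma pmor_at (P Q : poly) (f g : pmor P Q) : f = g ->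
  forall i, existT (fun j => dir Q j -> dir P i) (onpos f i) (ondir f i)
           = existT _ (onpos g i) (ondir g i).
Proof. intros ->; reflexivity. Qed.

Lemma comp_pair_eq (P Q : poly) (Y : Type) (t : pos P) (F1 F2 : dir P t -> pos Q)
  (D1 : dir (comp P Q) (existT _ t F1) -> Y) (D2 : dir (comp P Q) (existT _ t F2) -> Y) :
  (forall a, existT (fun j => dir Q j -> Y) (F1 a) (fun z => D1 (existT _ a z))
           = existT _ (F2 a) (fun z => D2 (existT _ a z))) ->
  existT (fun j : pos (comp P Q) => dir (comp P Q) j -> Y) (existT _ t F1) D1
  = existT _ (existT _ t F2) D2.
Proof.
  intro H.
  assert (E : F1 = F2) by (apply functional_extensionality; intro a;
                           exact (f_equal (@projT1 _ _) (H a))).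
  subst F2. f_equal. apply functional_extensionality; intros [a z].
  exact (f_equal (fun k => k z) (inj_pair2 _ _ _ _ _ (H a))).
Qed.

Lemma comp_pair_component (P Q : poly) (Y : Type) (P1 P2 : pos (comp P Q))
  (D1 : dir (comp P Q) P1 -> Y) (D2 : dir (comp P Q) P2 -> Y) :
  existT (fun j => dir (comp P Q) j -> Y) P1 D1 = existT _ P2 D2 ->
  forall (E : projT1 P1 = projT1 P2) a,
  existT (fun j => dir Q j -> Y) (projT2 P1 a) (fun z => D1 (existT _ a z))
  = existT _ (projT2 P2 (eq_rect _ (dir P) a _ E))
             (fun z => D2 (existT _ (eq_rect _ (dir P) a _ E) z)).
Proof.
  intro H. assert (E0 : P1 = P2) by exact (f_equal (@projT1 _ _) H).
  subst P2. apply inj_pair2 in H. subst D2. intros E a.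
  rewrite <- (eq_rect_eq _ _ _ a E). reflexivity.
Qed.

Lemma comp_pair_eq_curried (P Q : poly) (Y : Type) (P1 P2 : pos (comp P Q))
  (D1 : dir (comp P Q) P1 -> Y) (D2 : dir (comp P Q) P2 -> Y) :
  existT (fun t => dir P t -> {j : pos Q & dir Q j -> Y}) (projT1 P1)
    (fun a => existT _ (projT2 P1 a) (fun z => D1 (existT _ a z)))
  = existT _ (projT1 P2) (fun a => existT _ (projT2 P2 a) (fun z => D2 (existT _ a z))) ->
  existT (fun j => dir (comp P Q) j -> Y) P1 D1 = existT _ P2 D2.
Proof.
  destruct P1 as [t1 g1], P2 as [t2 g2]; simpl; intro H.
  assert (E : t1 = t2) by exact (f_equal (@projT1 _ _) H). subst t2.
  apply inj_pair2 in H. apply comp_pair_eq. intro a.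
  exact (f_equal (fun k => k a) H).
Qed.

Lemma limpos_eq (p : poly) (t1 t2 : limpos p) :
  (forall n, proj1_sig t1 n = proj1_sig t2 n) -> t1 = t2.
Proof.
  destruct t1 as [f1 H1], t2 as [f2 H2]; simpl; intro H.
  assert (E : f1 = f2) by (apply functional_extensionality_dep; exact H).
  subst f2. f_equal. apply proof_irrelevance.
Qed.

Lemma level_shape (p : poly) (n : nat) (A : pos (pw p (S n))) (r0 : pos p)
  (e : r0 = projT1 (snd A)) :
  A = (tt, existT (fun i => dir p i -> pos (pw p n)) r0
             (fun d => projT2 (snd A) (eq_rect _ (dir p) d _ e))).
Proof.
  destruct A as [[] [r1 k]]; simpl in *. subst r1. reflexivity.
Qed.

Lemma level_succ (p : poly) (t : limpos p) (n : nat) :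
  proj1_sig t (S n) = (tt, existT (fun i => dir p i -> pos (pw p n)) (root t)
                              (fun d => proj1_sig (child t d) n)).
Proof. exact (level_shape (proj1_sig t (S n)) (root_level t n)). Qed.

Section CategoryLaws.
Variables (c : poly) (eps : pmor c y)
  (cod : forall x : pos c, dir c x -> pos c)
  (cmp : forall x : pos c, {e : dir c x & dir c (cod x e)} -> dir c x).

(* The comultiplication of a category with objects pos c, morphisms dir c x
   out of x, codomains cod and (diagrammatic) composition cmp. *)
Definition delta_of : pmor c (comp c c) :=
  @PMor c (comp c c) (fun x => existT (fun i => dir c i -> pos c) x (cod x)) cmp.

(* e ; id = e, where the identity of x is the direction ondir eps x tt. *)
Definition right_identity : Prop :=
  forall x e, cmp x (existT _ e (ondir eps (cod x e) tt)) = e.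

(* id ; e = e, including cod id = x. *)
Definition left_identity : Prop :=
  forall x, existT (fun z => dir c z -> dir c x) (cod x (ondir eps x tt))
                   (fun e => cmp x (existT _ (ondir eps x tt) e))
            = existT _ x (fun e => e).

(* (e ; e2) ; w = e ; (e2 ; w), including the codomains. *)
Definition associativity : Prop :=
  forall x (e : dir c x) (e2 : dir c (cod x e)),
  existT (fun z => dir c z -> dir c x) (cod (cod x e) e2)
     (fun w => cmp x (existT _ e (cmp (cod x e) (existT _ e2 w))))
  = existT _ (cod x (cmp x (existT _ e e2)))
     (fun w => cmp x (existT _ (cmp x (existT _ e e2)) w)).

End CategoryLaws.
Arguments delta_of {c} cod cmp.
Arguments associativity {c} cod cmp.

Lemma comonoid_as_category (c : poly) (eps : pmor c y) (delta : pmor c (comp c c)) :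
  is_comonoid eps delta ->
  exists cod cmp, delta = delta_of cod cmp /\ right_identity eps cod cmp /\
                  left_identity eps cod cmp /\ associativity cod cmp.
Proof.
  intros [Hl [Hr Ha]]. destruct delta as [dpos cmp].
  assert (Hsource : forall x, projT1 (dpos x) = x)
    by (intro x; exact (f_equal (fun g => onpos g x) Hr)).
  destruct (section_as_dependent_function _ dpos Hsource) as [cod Hd]. subst dpos.
  exists cod, cmp. split; [reflexivity | split; [| split]].
  - intros x e. pose proof (pmor_at Hr x) as H. apply inj_pair2 in H.
    exact (f_equal (fun k => k e) H).
  - intro x. exact (pmor_at Hl x).
  - intros x e e2. pose proof (pmor_at Ha x) as H.
    pose proof (comp_pair_component H (@eq_refl _ x) e) as H1.
    exact (eq_sym (comp_pair_component H1 (@eq_refl _ (cod x e)) e2)).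
Qed.

Section Unfolding.
Variables (p c s : poly) (eps : pmor c y)
  (cod : forall x : pos c, dir c x -> pos c)
  (cmp : forall x : pos c, {e : dir c x & dir c (cod x e)} -> dir c x)
  (phi : pmor (comp s c) (comp p s)).

(* A state x = (i, f) of s ◁ c is a position of s with a c-object over each
   of its directions; a direction v of x is an s-direction b with a c-morphism
   out of f b. *)
Definition target (x : pos (comp s c)) (v : dir (comp s c) x) : pos c :=
  cod (projT2 x (projT1 v)) (projT2 v).
Arguments target : clear implicits.

Definition extend (x : pos (comp s c)) (v : dir (comp s c) x) (w : dir c (target x v))
  : dir (comp s c) x :=
  existT (fun a => dir c (projT2 x a)) (projT1 v)
    (cmp (projT2 x (projT1 v)) (existT (fun e0 => dir c (cod _ e0)) (projT2 v) w)).
Arguments extend : clear implicits.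

Lemma extend_id_l :
  left_identity eps cod cmp -> forall x b,
  existT (fun z => dir c z -> dir (comp s c) x)
    (target x (existT _ b (ondir eps (projT2 x b) tt)))
    (extend x (existT _ b (ondir eps (projT2 x b) tt)))
  = existT _ (projT2 x b) (fun w => existT _ b w).
Proof.
  intros Hid_l [i f] b.
  exact (f_equal (fun P : {z : pos c & dir c z -> dir c (f b)} =>
            existT (fun z => dir c z -> dir (comp s c) (existT _ i f)) (projT1 P)
              (fun w => existT (fun a => dir c (f a)) b (projT2 P w)))
         (Hid_l (f b))).
Qed.

Lemma extend_assoc :
  associativity cod cmp -> forall x (v : dir (comp s c) x) (w : dir c (target x v)),
  existT (fun z => dir c z -> dir (comp s c) x) (cod (target x v) w)
    (fun w' => extend x v (cmp (target x v) (existT _ w w')))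
  = existT _ (target x (extend x v w)) (extend x (extend x v w)).
Proof.
  intros Hassoc [i f] [b e] w.
  exact (f_equal (fun P : {z : pos c & dir c z -> dir c (f b)} =>
            existT (fun z => dir c z -> dir (comp s c) (existT _ i f)) (projT1 P)
              (fun w' => existT (fun a => dir c (f a)) b (projT2 P w')))
         (Hassoc (f b) e w)).
Qed.

Definition emit (x : pos (comp s c)) : pos p := projT1 (onpos phi x).

Definition resume (x : pos (comp s c)) (d : dir p (emit x)) : pos s :=
  projT2 (onpos phi x) d.

Definition pull (x : pos (comp s c)) (d : dir p (emit x)) (b : dir s (resume x d))
  : dir (comp s c) x :=
  ondir phi x (existT (fun d0 => dir s (projT2 (onpos phi x) d0)) d b).

Definition step (x : pos (comp s c)) (d : dir p (emit x)) : pos (comp s c) :=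
  existT (fun i => dir s i -> pos c) (resume x d) (fun b => target x (pull x d b)).

Definition step_back (x : pos (comp s c)) (d : dir p (emit x))
  (v : dir (comp s c) (step x d)) : dir (comp s c) x :=
  extend x (pull x d (projT1 v)) (projT2 v).
Arguments step_back : clear implicits.

Fixpoint unfold_level (n : nat) (x : pos (comp s c)) : pos (pw p n) :=
  match n return pos (pw p n) with
  | 0 => tt
  | S n' => (tt, existT (fun i => dir p i -> pos (pw p n')) (emit x)
                        (fun d => unfold_level n' (step x d)))
  end.

Lemma unfold_level_compat (n : nat) (x : pos (comp s c)) :
  onpos (ptrans p n) (unfold_level (S n) x) = unfold_level n x.
Proof.
  revert x; induction n as [|n IH]; intro x; [reflexivity|].
  simpl. f_equal. f_equal. apply functional_extensionality; intro d. apply IH.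
Qed.

Definition unfold (x : pos (comp s c)) : limpos p :=
  exist (fun t : forall n, pos (pw p n) =>
           forall n, onpos (ptrans p n) (t (S n)) = t n)
        (fun n => unfold_level n x) (fun n => unfold_level_compat n x).

Lemma child_unfold (x : pos (comp s c)) (d : dir p (emit x)) :
  child (unfold x) d = unfold (step x d).
Proof.
  apply limpos_eq; intro n. unfold child, childseq; simpl.
  rewrite <- eq_rect_eq. reflexivity.
Qed.

Definition along (t : limpos p) (x : pos (comp s c)) (e : t = unfold x)
  (d : dir p (root t)) : dir p (emit x) :=
  eq_rect _ (dir p) d _ (f_equal (@root p) e).

Lemma child_along (t : limpos p) (x : pos (comp s c)) (e : t = unfold x)
  (d : dir p (root t)) : child t d = unfold (step x (along e d)).
Proof. subst t. apply child_unfold. Qed.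

Fixpoint state_at (t : limpos p) (a : path t) {struct a} :
  forall x : pos (comp s c), t = unfold x -> pos (comp s c) :=
  match a in path t0 return forall x, t0 = unfold x -> pos (comp s c) with
  | @Here _ t0 => fun x _ => x
  | @There _ t0 d q => fun x e => state_at q (child_along e d)
  end.

Fixpoint trace (t : limpos p) (a : path t) {struct a} :
  forall x (e : t = unfold x), dir s (projT1 (state_at a e)) -> dir (comp s c) x :=
  match a as a0 in path t0
    return forall x (e : t0 = unfold x),
           dir s (projT1 (state_at a0 e)) -> dir (comp s c) x with
  | @Here _ t0 => fun x e b =>
      existT (fun a => dir c (projT2 x a)) b (ondir eps (projT2 x b) tt)
  | @There _ t0 d q => fun x e b =>
      step_back x (along e d) (trace q (child_along e d) b)
  end.

Definition handler_of : pmor (comp s c) (comp (cofree p) s) :=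
  @PMor (comp s c) (comp (cofree p) s)
    (fun x => existT (fun t : limpos p => path t -> pos s) (unfold x)
                     (fun a => projT1 (state_at a eq_refl)))
    (fun x ab => trace (projT1 ab) eq_refl (projT2 ab)).

Lemma handler_of_counit :
  pcomp (lunit s) (pcomp (hcomp (cofree_eps p) (pid s)) handler_of)
    = pcomp (runit s) (hcomp (pid s) eps).
Proof. reflexivity. Qed.

Lemma handler_of_projects :
  right_identity eps cod cmp ->
  pcomp (hcomp (cofree_proj p) (pid s)) handler_of = phi.
Proof.
  intro Hid_r. apply pmor_eq; intro x.
  transitivity (existT (fun j => dir (comp p s) j -> dir (comp s c) x)
    (existT (fun i => dir p i -> pos s) (projT1 (onpos phi x)) (fun d => projT2 (onpos phi x) d))
    (fun z => ondir phi x (existT _ (projT1 z) (projT2 z)))).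
  - f_equal. apply functional_extensionality; intro z.
    cbn; cbv [step_back extend target pull]; cbn [projT1 projT2].
    destruct (ondir phi x _) as [a e]. simpl. rewrite Hid_r. reflexivity.
  - generalize (ondir phi x). destruct (onpos phi x) as [r0 h0]. intro g.
    f_equal. apply functional_extensionality; intros [d b]. reflexivity.
Qed.

Definition restart (x : pos (comp s c)) (s0 : pos s) (g : dir s s0 -> pos c)
  (k : forall b, dir c (g b) -> dir (comp s c) x)
  : {j : pos (comp (cofree p) s) & dir (comp (cofree p) s) j -> dir (comp s c) x} :=
  let y0 := existT (fun i => dir s i -> pos c) s0 g in
  existT _ (onpos handler_of y0)
    (fun z => k (projT1 (ondir handler_of y0 z)) (projT2 (ondir handler_of y0 z))).
Arguments restart : clear implicits.

Lemma restart_ext x s0 (g1 g2 : dir s s0 -> pos c)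
  (k1 : forall b, dir c (g1 b) -> dir (comp s c) x)
  (k2 : forall b, dir c (g2 b) -> dir (comp s c) x) :
  (forall b, existT (fun z => dir c z -> dir (comp s c) x) (g1 b) (k1 b)
             = existT _ (g2 b) (k2 b)) ->
  restart x s0 g1 k1 = restart x s0 g2 k2.
Proof.
  intro H.
  exact (f_equal (fun P => restart x s0 (projT1 P) (projT2 P))
           (sigT_fun_eq (fun b z => dir c z -> dir (comp s c) x) g1 g2 k1 k2 H)).
Qed.

Definition prepend (x : pos (comp s c)) (d : dir p (emit x)) (J : Type) (D : J -> Type)
  (P : {j : J & D j -> dir (comp s c) (step x d)}) : {j : J & D j -> dir (comp s c) x} :=
  existT _ (projT1 P) (fun z => step_back x d (projT2 P z)).
Arguments prepend x d {J D} P.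

Lemma prepend_restart x d s0 (g : dir s s0 -> pos c)
  (k : forall b, dir c (g b) -> dir (comp s c) (step x d)) :
  prepend x d (restart (step x d) s0 g k)
  = restart x s0 g (fun b w => step_back x d (k b w)).
Proof. reflexivity. Qed.

(* The comultiplication law of handler_of at the path a: following a and then
   a path b is restarting at the end of a and extending the accumulated
   direction. *)
Definition splits_at (t : limpos p) (a : path t) x (e : t = unfold x) : Prop :=
  existT (fun j : pos (comp (cofree p) s) => dir (comp (cofree p) s) j -> dir (comp s c) x)
    (existT (fun t' : limpos p => path t' -> pos s) (subtree a)
       (fun b => projT1 (state_at (pconcat a b) e)))
    (fun bz => trace (pconcat a (projT1 bz)) e (projT2 bz))
  = restart x (projT1 (state_at a e)) (fun b => target x (trace a e b))
            (fun b => extend x (trace a e b)).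

Lemma splits_here :
  left_identity eps cod cmp -> forall x, splits_at (Here (unfold x)) eq_refl.
Proof.
  intros Hid_l [i f].
  transitivity (restart (existT _ i f) i f (fun b w => existT _ b w)).
  - unfold restart; simpl. f_equal. apply functional_extensionality; intro z.
    destruct (trace _ _ _). reflexivity.
  - apply restart_ext; intro b. symmetry. exact (extend_id_l Hid_l (existT _ i f) b).
Qed.

Lemma splits_there :
  associativity cod cmp ->
  forall (t : limpos p) (d : dir p (root t)) (q : path (child t d)),
  (forall x' (e' : child t d = unfold x'), splits_at q e') ->
  forall x (e : t = unfold x), splits_at (There q) e.
Proof.
  intros Hassoc t d q IH x e.
  refine (eq_trans (f_equal (prepend x (along e d)) (IH _ (child_along e d))) _).
  rewrite prepend_restart. apply restart_ext; intro b.
  pose (v := trace q (child_along e d) b).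
  exact (extend_assoc Hassoc (pull x (along e d) (projT1 v)) (projT2 v)).
Qed.

Lemma handler_of_comult :
  left_identity eps cod cmp -> associativity cod cmp ->
  pcomp (assoc (cofree p) (cofree p) s) (pcomp (hcomp (cofree_delta p) (pid s)) handler_of)
  = pcomp (hcomp (pid (cofree p)) handler_of)
      (pcomp (assoc (cofree p) s c)
        (pcomp (hcomp handler_of (pid c))
          (pcomp (assoc_inv s c c) (hcomp (pid s) (delta_of cod cmp))))).
Proof.
  intros Hid_l Hassoc.
  assert (Hsplit : forall t (a : path t) x (e : t = unfold x), splits_at a e).
  { intros t a; induction a as [t0|t0 d q IH]; intros x e.
    - subst t0. exact (splits_here Hid_l x).
    - exact (splits_there Hassoc IH e). }
  apply pmor_eq; intros [i f].
  apply comp_pair_eq; intro a. exact (Hsplit _ a _ eq_refl).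
Qed.

Lemma handler_of_is_handler :
  left_identity eps cod cmp -> associativity cod cmp ->
  is_handler (cofree_eps p) (cofree_delta p) eps (delta_of cod cmp) handler_of.
Proof.
  intros Hid_l Hassoc.
  split; [exact handler_of_counit | exact (handler_of_comult Hid_l Hassoc)].
Qed.

End Unfolding.
Arguments prepend {p c s cod} cmp phi x d {J D} P.

Section Uniqueness.
Variables (p c s : poly) (eps : pmor c y)
  (cod : forall x : pos c, dir c x -> pos c)
  (cmp : forall x : pos c, {e : dir c x & dir c (cod x e)} -> dir c x)
  (Psi : pmor (comp s c) (comp (cofree p) s)).
Hypothesis HPsi : is_handler (cofree_eps p) (cofree_delta p) eps (delta_of cod cmp) Psi.

Let phi := pcomp (hcomp (cofree_proj p) (pid s)) Psi.
Let tree (x : pos (comp s c)) : limpos p := projT1 (onpos Psi x).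

(* The comultiplication law at the one-step path: subtrees of Psi's trees
   are Psi's trees of the successor states. *)
Lemma child_tree x d : child (tree x) d = tree (step cod phi x d).
Proof.
  destruct x as [i f].
  pose proof (comp_pair_component (pmor_at (proj2 HPsi) (existT _ i f))
     (@eq_refl _ (tree (existT _ i f))) (@There p _ d (Here (child _ d)))) as H.
  exact (f_equal (fun P => projT1 (projT1 P)) H).
Qed.

Lemma tree_is_unfolding x : tree x = unfold cod phi x.
Proof.
  apply limpos_eq; intro n. revert x; induction n as [|n IH]; intro x.
  - change (proj1_sig (unfold cod phi x) 0) with tt.
    destruct (proj1_sig (tree x) 0). reflexivity.
  - rewrite level_succ. simpl. f_equal. f_equal.
    apply functional_extensionality; intro d.
    change (childseq (tree x) d n) with (proj1_sig (child (tree x) d) n).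
    rewrite child_tree. apply IH.
Qed.

Definition psi_branch x (a : path (tree x)) :=
  existT (fun j => dir s j -> dir (comp s c) x) (projT2 (onpos Psi x) a)
    (fun b => ondir Psi x (existT _ a b)).

Definition unfold_branch (t : limpos p) (a : path t) x (e : t = unfold cod phi x) :=
  existT (fun j => dir s j -> dir (comp s c) x) (projT1 (state_at a e))
    (fun b => trace eps cmp a e b).

Lemma unfold_branch_transport (t : limpos p) (a : path t) x (e : t = unfold cod phi x) :
  unfold_branch a e = unfold_branch (eq_rect _ (@path p) a _ e) (@eq_refl _ (unfold cod phi x)).
Proof. subst t. reflexivity. Qed.

(* The comultiplication law of Psi at a path d·q through the root direction
   d: Psi along d·q is Psi at the successor state along q, mapped back. *)
Lemma psi_branch_there x (d : dir p (root (tree x))) (q : path (child (tree x) d)) :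
  psi_branch x (There q)
  = prepend cmp phi x d
      (psi_branch (step cod phi x d) (eq_rect _ (@path p) q _ (child_tree x d))).
Proof.
  destruct x as [i f].
  exact (comp_pair_component
           (comp_pair_component (pmor_at (proj2 HPsi) (existT _ i f)) eq_refl
              (@There p _ d (Here (child _ d))))
           (child_tree _ d) q).
Qed.

Lemma psi_branch_there_irrel x (d d' : dir p (emit phi x)) (Hd : d' = d)
  (q : path (child (tree x) d))
  (e : child (tree x) d = tree (step cod phi x d'))
  (e' : child (tree x) d = tree (step cod phi x d)) :
  prepend cmp phi x d' (psi_branch (step cod phi x d') (eq_rect _ (@path p) q _ e))
  = prepend cmp phi x d (psi_branch (step cod phi x d) (eq_rect _ (@path p) q _ e')).
Proof. subst d'. rewrite (proof_irrelevance _ e e'). reflexivity. Qed.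

Lemma psi_branch_unfold (t : limpos p) (a : path t) :
  forall x (e1 : tree x = t) (e2 : t = unfold cod phi x),
  psi_branch x (eq_rect _ (@path p) a _ (eq_sym e1)) = unfold_branch a e2.
Proof.
  induction a as [t0|t0 d q IH]; intros x e1 e2; subst t0.
  - exact (pmor_at (proj1 HPsi) x).
  - pose (d' := along e2 d).
    assert (Hd : d' = d) by exact (eq_sym (eq_rect_eq _ _ _ d (f_equal (@root p) e2))).
    pose (e1 := eq_trans (f_equal (fun z => tree (step cod phi x z)) Hd)
                         (eq_sym (child_tree x d))).
    refine (eq_trans (psi_branch_there x q) _).
    refine (eq_trans (eq_sym (psi_branch_there_irrel x Hd q (eq_sym e1) (child_tree x d))) _).
    exact (f_equal (prepend cmp phi x d') (IH (step cod phi x d') e1 (child_along e2 d))).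
Qed.

Lemma handler_determined : Psi = handler_of eps cod cmp phi.
Proof.
  apply pmor_eq; intro x. apply comp_pair_eq_curried.
  apply (sigT_transport_eq _ (tree_is_unfolding x)). intro a.
  refine (eq_trans (psi_branch_unfold a eq_refl (tree_is_unfolding x)) _).
  apply unfold_branch_transport.
Qed.

End Uniqueness.

Theorem mainTheorem12 (p c : poly) (eps : pmor c y) (delta : pmor c (comp c c))
  (Hc : is_comonoid eps delta) (s : poly) :
  let F := fun Psi : pmor (comp s c) (comp (cofree p) s) =>
             pcomp (hcomp (cofree_proj p) (pid s)) Psi in
  (forall Psi1 Psi2 : pmor (comp s c) (comp (cofree p) s),
      is_handler (cofree_eps p) (cofree_delta p) eps delta Psi1 ->
      is_handler (cofree_eps p) (cofree_delta p) eps delta Psi2 ->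
      F Psi1 = F Psi2 -> Psi1 = Psi2) /\
  (forall phi : pmor (comp s c) (comp p s),
      exists Psi : pmor (comp s c) (comp (cofree p) s),
        is_handler (cofree_eps p) (cofree_delta p) eps delta Psi /\ F Psi = phi).
Proof.
  intros F.
  destruct (comonoid_as_category Hc) as (cod & cmp & -> & Hid_r & Hid_l & Hassoc).
  split.
  - intros Psi1 Psi2 H1 H2 HF. unfold F in HF.
    rewrite (handler_determined H1), (handler_determined H2), HF. reflexivity.
  - intro phi. exists (handler_of eps cod cmp phi). split.
    + exact (handler_of_is_handler phi Hid_l Hassoc).
    + exact (handler_of_projects phi Hid_r).
Qed.
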